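(* Let $\mathbb{R}^m$ be endowed with a norm $\|\cdot\|$. Let $\bar A\in\mathbb{R}^{(m+1)\times n}$ have at least two different columns and let $v\in\mathbb{R}^m$. Suppose $\bar u\in F(v)$ and $x\in\Delta_{n-1}$ satisfy $\bar Ax\ne\bar u$. Then for $d:=\frac{\bar Ax-\bar u}{\|\bar Ax-\bar u\|_v}$, \[ \Phi_v(\bar A)\le\max\{\lambda:\ \exists\, y,z\in\Delta_{n-1},\ I(y)\subseteq I(x),\ \bar A(y-z)=\lambda d\}. \]
   Context: $\Delta_{n-1}=\{x\in\mathbb{R}^n_+:\sum_ix_i=1\}$; for $x\in\Delta_{n-1}$, $I(x)=\{i: x_i>0\}$. A matrix is identified with the set of its columns; $\mathrm{conv}(\bar A)=\{\bar Ax:x\in\Delta_{n-1}\}$. For $\bar w=(w,w_{m+1})\in\mathbb{R}^{m+1}$, $\|\bar w\|_v=\sqrt{\|w\|^2+|\langle v,w\rangle+w_{m+1}|}$; for nonempty $F,G\subseteq\mathbb{R}^{m+1}$, $\mathrm{dist}_v(F,G)=\min_{\bar w\in F,\bar w'\in G}\|\bar w-\bar w'\|_v$. $F(v)=\operatorname{Argmin}_{\bar w\in\mathrm{conv}(\bar A)}\langle(v,1),\bar w\rangle$, a face of $\mathrm{conv}(\bar A)$. The local facial distance is $\Phi_v(\bar A)=\min\{\mathrm{dist}_v(G,\mathrm{conv}(\bar A\setminus G)):G\text{ a face of }F(v),\ \emptyset\ne G\ne\mathrm{conv}(\bar A)\}$, where $\bar A\setminus G$ denotes the columns of $\bar A$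 not in $G$. *)

From HB Require Import structures.
From mathcomp Require Import all_boot all_order all_algebra.
From mathcomp Require Import classical_sets reals.
Set Implicit Arguments. Unset Strict Implicit. Unset Printing Implicit Defensive.
Import Order.TTheory GRing.Theory Num.Theory.
Local Open Scope ring_scope.
Local Open Scope classical_set_scope.

Definition is_norm (R : realType) (m : nat) (N : 'cV[R]_m -> R) : Prop :=
  [/\ forall x, N x = 0 -> x = 0,
      forall (a : R) x, N (a *: x) = `|a| * N x
    & forall x y, N (x + y) <= N x + N y].

Definition dotv (R : realType) (m : nat) (v w : 'cV[R]_m) : R :=
  \sum_(i < m) v i 0 * w i 0.

(* wb = (w, w_{m+1}) in R^{m+1}: w = usubmx wb, w_{m+1} = dsubmx wb 0 0. *)
Definition vnorm (R : realType) (m : nat) (N : 'cV[R]_m -> R) (v : 'cV[R]_m)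
  (wb : 'cV[R]_(m + 1)) : R :=
  Num.sqrt (N (usubmx wb) ^+ 2 + `| dotv v (usubmx wb) + dsubmx wb 0 0 |).

Definition lin1 (R : realType) (m : nat) (v : 'cV[R]_m) (wb : 'cV[R]_(m + 1)) : R :=
  dotv v (usubmx wb) + dsubmx wb 0 0.

Definition simplex (R : realType) (n : nat) : set 'cV[R]_n :=
  [set x | (forall i, 0 <= x i 0) /\ \sum_(i < n) x i 0 = 1].
Arguments simplex R n : clear implicits.
Arguments simplex {R} n.

Definition supp (R : realType) (n : nat) (x : 'cV[R]_n) : set 'I_n :=
  [set i | 0 < x i 0].

Definition conv_mx (R : realType) (p n : nat) (Ab : 'M[R]_(p, n)) : set 'cV[R]_p :=
  [set Ab *m x | x in simplex n].

Definition conv_cols (R : realType) (p n : nat) (Ab : 'M[R]_(p, n)) (J : set 'I_n)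
  : set 'cV[R]_p :=
  [set Ab *m x | x in [set x | simplex n x /\ (forall j, x j 0 != 0 -> J j)]].

Definition is_face (R : realType) (p : nat) (C G : set 'cV[R]_p) : Prop :=
  [/\ G `<=` C,
      (forall x y (t : R), G x -> G y -> 0 <= t <= 1 -> G (t *: x + (1 - t) *: y))
    & (forall x y (t : R), C x -> C y -> 0 < t < 1 -> G (t *: x + (1 - t) *: y) ->
         G x /\ G y)].

Definition Fv (R : realType) (m n : nat) (v : 'cV[R]_m) (Ab : 'M[R]_(m + 1, n))
  : set 'cV[R]_(m + 1) :=
  [set wb | conv_mx Ab wb /\ forall wb', conv_mx Ab wb' -> lin1 v wb <= lin1 v wb'].

(* dist_v(F, G); the minimum exists for the (compact) sets used below, so it is the inf. *)
Definition distv (R : realType) (m : nat) (N : 'cV[R]_m -> R) (v : 'cV[R]_m)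
  (F G : set 'cV[R]_(m + 1)) : R :=
  inf [set r | exists w w', F w /\ G w' /\ r = vnorm N v (w - w')].

Definition Phi (R : realType) (m n : nat) (N : 'cV[R]_m -> R) (v : 'cV[R]_m)
  (Ab : 'M[R]_(m + 1, n)) : R :=
  inf [set r | exists G : set 'cV[R]_(m + 1),
         [/\ is_face (Fv v Ab) G, G !=set0, G <> conv_mx Ab &
             r = distv N v G (conv_cols Ab [set j | ~ G (col j Ab)])]].

(* Write ub = Ab w with w in the simplex maximising the overlap sum_k min(x_k, w_k)
   (by compactness), and cancel the common part c = min(x, w): x = c + mu y and
   w = c + mu z with y, z in the simplex, mu = 1 - sum_k c_k > 0 and I(y) in I(x),
   so that Ab (y - z) = (Ab x - ub) / mu.  The point Ab z lies in F(v), and by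
   maximality of the overlap no column Ab_k with y_k > 0 lies in the smallest
   face G of conv(Ab) containing Ab z.  Hence
   Phi_v(Ab) <= dist_v(G, conv(Ab \ G)) <= ||Ab z - Ab y||_v <= ||Ab x - ub||_v / mu,
   the last step because mu <= 1, and the right-hand side is the lambda
   realised by y and z. *)

From HB Require Import structures.
From mathcomp Require Import all_boot all_order all_algebra.
From mathcomp Require Import classical_sets reals.
From mathcomp Require Import boolp topology normedtype derive.
From mathcomp Require Import ring lra.
Import Order.TTheory GRing.Theory Num.Theory.
Import numFieldNormedType.Exports.
Set Implicit Arguments. Unset Strict Implicit. Unset Printing Implicit Defensive.
Local Open Scope ring_scope.
Local Open Scope classical_set_scope.

Section Simplex.
Variable R : realType.

Definition is_convex p (C : set 'cV[R]_p) : Prop :=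
  forall a b (t : R), C a -> C b -> 0 <= t <= 1 -> C (t *: a + (1 - t) *: b).

Lemma simplex_convex n : is_convex (simplex n).
Proof.
move=> a b t [a0 a1] [b0 b1] /andP[t0 t1]; split.
  by move=> i; rewrite !mxE addr_ge0 // mulr_ge0 // subr_ge0.
rewrite (eq_bigr (fun i => t * a i 0 + (1 - t) * b i 0)); last by move=> i _; rewrite !mxE.
by rewrite big_split /= -!mulr_sumr a1 b1 !mulr1 subrKC.
Qed.

Lemma simplex_delta n (j : 'I_n) : simplex n (delta_mx j 0 : 'cV[R]_n).
Proof.
split; first by move=> i; rewrite mxE; case: (_ && _).
by rewrite (bigD1 j) //= big1 => [|i /negPf ij]; rewrite mxE ?eqxx ?ij ?addr0.
Qed.

Lemma simplex_le1 n (x : 'cV[R]_n) k : simplex n x -> x k 0 <= 1.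
Proof. by move=> [x0 <-]; rewrite (bigD1 k) //= lerDl sumr_ge0. Qed.

Lemma simplex_support n (x : 'cV[R]_n) : simplex n x -> exists k, 0 < x k 0.
Proof.
move=> [x0 x1]; have : \sum_k x k 0 <> 0 by rewrite x1; exact/eqP/oner_neq0.
by case/(psumr_neq0P (fun k _ => x0 k)) => k /andP[_ xk]; exists k.
Qed.

Lemma simplex_le_eq n (a b : 'cV[R]_n) :
  simplex n a -> simplex n b -> (forall k, a k 0 <= b k 0) -> a = b.
Proof.
move=> [_ a1] [_ b1] ab; apply/colP => k; apply/eqP; rewrite eq_sym -subr_eq0.
have sum0 : \sum_k (b k 0 - a k 0) = 0 by rewrite sumrB a1 b1 subrr.
by apply/eqP; apply: (psumr_eq0P _ sum0) => // i _; rewrite subr_ge0.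
Qed.

Lemma simplex_shift n (r s : 'cV[R]_n) (mu : R) :
  (forall k, 0 <= r k 0) -> 0 <= mu -> \sum_k r k 0 + mu = 1 -> simplex n s ->
  simplex n (r + mu *: s).
Proof.
move=> r0 mu0 rmu [s0 s1]; split.
  by move=> k; rewrite !mxE addr_ge0 // mulr_ge0.
rewrite (eq_bigr (fun k => r k 0 + mu * s k 0)); last by move=> k _; rewrite !mxE.
by rewrite big_split /= -mulr_sumr s1 mulr1.
Qed.

Lemma simplex_rescale n (x r : 'cV[R]_n) :
  simplex n x -> (forall k, r k 0 <= x k 0) -> \sum_k r k 0 < 1 ->
  simplex n ((1 - \sum_k r k 0)^-1 *: (x - r)).
Proof.
set mu := 1 - _ => [[_ x1]] rx; rewrite -subr_gt0 -/mu => mu0.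
split=> [k|]; first by rewrite !mxE mulr_ge0 ?subr_ge0 // invr_ge0 ltW.
rewrite (eq_bigr (fun k => mu^-1 * (x k 0 - r k 0))); last by move=> k _; rewrite !mxE.
by rewrite -mulr_sumr sumrB x1 mulVf // lt0r_neq0.
Qed.

Lemma mulmx_sum_col p n (A : 'M[R]_(p, n)) (y : 'cV[R]_n) :
  A *m y = \sum_k y k 0 *: col k A.
Proof.
apply/colP => i; rewrite !mxE summxE; apply: eq_bigr => k _.
by rewrite !mxE mulrC.
Qed.

Lemma conv_mx_convex p n (A : 'M[R]_(p, n)) : is_convex (conv_mx A).
Proof.
move=> _ _ t [a sa <-] [b sb <-] t01; exists (t *: a + (1 - t) *: b).
  exact: simplex_convex.
by rewrite mulmxDr !scalemxAr.
Qed.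

Lemma conv_mx_col p n (A : 'M[R]_(p, n)) j : conv_mx A (col j A).
Proof. by exists (delta_mx j 0); [exact: simplex_delta | rewrite colE]. Qed.

Lemma simplex_diff_bounded p n (A : 'M[R]_(p, n)) (c : 'cV[R]_p) :
  c != 0 -> exists M, forall y z (lam : R),
    simplex n y -> simplex n z -> A *m (y - z) = lam *: c -> lam <= M.
Proof.
case/matrix0Pn => i [j]; rewrite (ord1 j) {j} => ci.
have ci0 : 0 < `|c i 0| by rewrite normr_gt0.
exists ((\sum_k `|A i k|) / `|c i 0|) => y z lam sy sz.
move=> /(congr1 (fun M : 'cV[R]_p => M i 0)); rewrite !mxE => lamE.
rewrite ler_pdivlMr //; apply: le_trans (ler_wpM2r (ltW ci0) (ler_norm lam)) _.
rewrite -normrM -lamE (le_trans (ler_norm_sum _ _ _)) // ler_sum // => k _.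
rewrite normrM ler_piMr // !mxE ler_norml.
have := simplex_le1 k sy; have := simplex_le1 k sz; have := sy.1 k; have := sz.1 k.
by move=> *; apply/andP; split; lra.
Qed.

Lemma le_sup_direction p n (A : 'M[R]_(p, n)) (x : 'cV[R]_n) (c : 'cV[R]_p) y z lam :
  c != 0 -> simplex n y -> simplex n z -> supp y `<=` supp x ->
  A *m (y - z) = lam *: c ->
  lam <= sup [set l : R | exists y z : 'cV[R]_n,
    [/\ simplex n y, simplex n z, supp y `<=` supp x & A *m (y - z) = l *: c]].
Proof.
move=> c0 sy sz yx Ayz; apply: sup_upper_bound; last by exists y, z.
split; first by exists lam, y, z.
have [M bound] := simplex_diff_bounded A c0.
by exists M => l [y' [z' [sy' sz' _ Al]]]; exact: bound Al.
Qed.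

End Simplex.

Section CommonPart.
Variables (R : realType) (n : nat).
Implicit Types x w : 'cV[R]_n.

Definition common x w : 'cV[R]_n := \col_k Num.min (x k 0) (w k 0).
Definition overlap x w : R := \sum_k common x w k 0.
Definition excess x w : R := 1 - overlap x w.
Definition residual x w : 'cV[R]_n := (excess x w)^-1 *: (x - common x w).

Lemma commonC x w : common x w = common w x.
Proof. by apply/colP => k; rewrite !mxE minC. Qed.

Lemma excessC x w : excess x w = excess w x.
Proof. by rewrite /excess /overlap commonC. Qed.

Lemma common_le x w k : common x w k 0 <= x k 0.
Proof. by rewrite mxE ge_min lexx. Qed.

Lemma common_ge0 x w k : simplex n x -> simplex n w -> 0 <= common x w k 0.
Proof. by move=> sx sw; rewrite mxE le_min sx.1 sw.1. Qed.

Lemma excess_gt0 x w : simplex n x -> simplex n w -> x != w -> 0 < excess x w.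
Proof.
move=> sx sw; apply: contraNT; rewrite -leNgt => ex_le0; apply/eqP.
have exE : excess x w = \sum_k (x k 0 - common x w k 0) by rewrite sumrB sx.2.
have sum0 : \sum_k (x k 0 - common x w k 0) = 0.
  apply/eqP; rewrite eq_le -exE ex_le0 exE sumr_ge0 // => k _.
  by rewrite subr_ge0 common_le.
have x_common k : x k 0 = common x w k 0.
  apply/eqP; rewrite -subr_eq0; apply/eqP; apply: (psumr_eq0P _ sum0) => // i _.
  by rewrite subr_ge0 common_le.
by apply: simplex_le_eq sx sw _ => k; rewrite x_common commonC common_le.
Qed.

Lemma excess_le1 x w : simplex n x -> simplex n w -> excess x w <= 1.
Proof. by move=> sx sw; rewrite gerBl sumr_ge0 // => k _; exact: common_ge0. Qed.

Lemma residual_simplex x w : simplex n x -> simplex n w -> x != w ->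
  simplex n (residual x w).
Proof.
move=> sx sw xw; rewrite /residual /excess /overlap.
apply: (simplex_rescale (r := common x w) sx) => [k|]; first exact: common_le.
by rewrite -subr_gt0 excess_gt0.
Qed.

Lemma residual_decomp x w : excess x w != 0 ->
  common x w + excess x w *: residual x w = x.
Proof. by move=> ex0; rewrite scalerA mulfV // scale1r addrC subrK. Qed.

Lemma residualB x w : residual x w - residual w x = (excess x w)^-1 *: (x - w).
Proof.
by rewrite /residual [excess w x]excessC [common w x]commonC -scalerBr opprB addrA subrK.
Qed.

Lemma residual_gt0 x w k : 0 < excess x w ->
  (0 < residual x w k 0) = (common x w k 0 < x k 0).
Proof.
by move=> ex0; rewrite [residual _ _ _ _]mxE pmulr_rgt0 ?invr_gt0 // !mxE subr_gt0.
Qed.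

Lemma supp_residual x w : simplex n x -> simplex n w -> x != w ->
  supp (residual x w) `<=` supp x.
Proof.
move=> sx sw xw k; rewrite /supp /= residual_gt0 ?excess_gt0 //.
exact: le_lt_trans (common_ge0 k sx sw).
Qed.

Lemma overlap_lt x w w' j :
  (forall k, common x w k 0 <= w' k 0) ->
  common x w j 0 < x j 0 -> common x w j 0 < w' j 0 -> overlap x w < overlap x w'.
Proof.
move=> cw' cxj cwj; rewrite /overlap (bigD1 j) //= [X in _ < X](bigD1 j) //=.
rewrite [common x w' _ _]mxE ltr_leD ?lt_min ?cxj ?cwj // ler_sum // => k _.
by rewrite [common x w' _ _]mxE le_min common_le cw'.
Qed.

End CommonPart.

Section Compactness.
Variable R : realType.

Lemma continuous_sum (T : topologicalType) (I : Type) (s : seq I) (F : I -> T -> R) :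
  (forall i, continuous (F i)) -> continuous (fun t => \sum_(i <- s) F i t).
Proof.
move=> cF; elim: s => [|a s IH].
  by under eq_fun => ? do rewrite big_nil; exact: cst_continuous.
under eq_fun => ? do rewrite big_cons.
by move=> t; apply: (@continuousD _ R^o); [exact: cF | exact: IH].
Qed.

Lemma closed_preimage (T : topologicalType) (P : set R) (f : T -> R) :
  closed P -> continuous f -> closed [set t | P (f t)].
Proof. by move=> cP /continuous_closedP; apply. Qed.

(* Heine-Borel is available for row vectors, whence the transposes. *)
Lemma simplex_fiber_closed p n (A : 'M[R]_(p, n)) (u : 'cV[R]_p) :
  closed [set r : 'rV[R]_n | simplex n r^T /\ A *m r^T = u].
Proof.
have trE (r : 'rV[R]_n) i : r^T i 0 = r 0 i by rewrite mxE.
have AE (r : 'rV[R]_n) l : (A *m r^T) l 0 = \sum_k A l k * r 0 k.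
  by rewrite mxE; apply: eq_bigr => k _; rewrite trE.
have -> : [set r : 'rV[R]_n | simplex n r^T /\ A *m r^T = u] =
    \bigcap_i [set r | 0 <= r 0 i] `&` [set r | \sum_i r 0 i = 1] `&`
    \bigcap_l [set r | \sum_k A l k * r 0 k = u l 0].
  apply/seteqP; split=> r /= [[r0 r1] Ar]; (split; first split).
  - by move=> i _ /=; rewrite -trE.
  - by rewrite -r1; apply: eq_bigr => i _; rewrite trE.
  - by move=> l _ /=; rewrite -AE Ar.
  - by move=> i; rewrite trE; exact: r0.
  - by rewrite -r1; apply: eq_bigr => i _; rewrite trE.
  - by apply/colP => l; rewrite AE; exact: Ar.
apply: closedI; first apply: closedI.
- apply: closed_bigI => i _.
  exact: (closed_preimage (@closed_ge _ 0) (@coord_continuous _ _ _ 0 i)).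
- apply: (closed_preimage (@closed_eq _ 1)).
  by apply: continuous_sum => i; exact: coord_continuous.
- apply: closed_bigI => l _; apply: (closed_preimage (@closed_eq _ (u l 0))).
  apply: continuous_sum => k t.
  by apply: (@continuousM _ _ (fun=> A l k) (fun r : 'rV[R]_n => r 0 k));
    [exact: cst_continuous | exact: coord_continuous].
Qed.

Lemma simplex_fiber_compact p n (A : 'M[R]_(p, n)) (u : 'cV[R]_p) :
  compact [set r : 'rV[R]_n | simplex n r^T /\ A *m r^T = u].
Proof.
have box := @rV_compact R n (fun=> `[0, 1]%classic) (fun=> @segment_compact R 0 1).
apply: (subclosed_compact (simplex_fiber_closed (A := A) (u := u)) box) => r [sr _] i /=.
by have := simplex_le1 i sr; have := sr.1 i; rewrite !mxE in_itv /= => -> ->.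
Qed.

Lemma overlap_argmax p n (A : 'M[R]_(p, n)) (u : 'cV[R]_p) (x : 'cV[R]_n) :
  (exists2 w, simplex n w & A *m w = u) ->
  exists w, [/\ simplex n w, A *m w = u &
    forall w', simplex n w' -> A *m w' = u -> overlap x w' <= overlap x w].
Proof.
move=> [w0 sw0 Aw0].
set K := [set r : 'rV[R]_n | simplex n r^T /\ A *m r^T = u].
have K0 : K !=set0 by exists w0^T; rewrite /K /= trmxK.
pose f (r : 'rV[R]_n) := \sum_i Num.min (x i 0) (r 0 i).
have fE r : f r = overlap x r^T by apply: eq_bigr => i _; rewrite !mxE.
have cf : continuous f.
  apply: continuous_sum => i; apply: min_fun_continuous; first exact: cst_continuous.
  exact: coord_continuous.
have [c /set_mem [sc Ac] cmax] :=
  compact_EVT_max K0 (simplex_fiber_compact (A := A) (u := u)) (continuous_subspaceT cf).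
exists c^T; split=> // w' sw' Aw'; rewrite -fE -[w']trmxK -fE.
by apply: cmax; apply/mem_set; rewrite /K /= trmxK.
Qed.

End Compactness.

Section Objective.
Variables (R : realType) (m : nat) (v : 'cV[R]_m).

Lemma lin1D (a b : 'cV[R]_(m + 1)) : lin1 v (a + b) = lin1 v a + lin1 v b.
Proof.
rewrite /lin1 /dotv linearD !mxE addrACA; congr (_ + _).
by rewrite -big_split; apply: eq_bigr => i _; rewrite !mxE mulrDr.
Qed.

Lemma lin1Z (k : R) (a : 'cV[R]_(m + 1)) : lin1 v (k *: a) = k * lin1 v a.
Proof.
rewrite /lin1 /dotv linearZ !mxE mulrDr mulr_sumr; congr (_ + _).
by apply: eq_bigr => i _; rewrite !mxE mulrCA.
Qed.

Lemma lin1_mulmx n (A : 'M[R]_(m + 1, n)) (y : 'cV[R]_n) :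
  lin1 v (A *m y) = \sum_k y k 0 * lin1 v (col k A).
Proof.
have lin10 : lin1 v 0 = 0 by rewrite -(scale0r 0) lin1Z mul0r.
rewrite mulmx_sum_col (big_morph (lin1 v) lin1D lin10).
by apply: eq_bigr => k _; rewrite lin1Z.
Qed.

Variables (n : nat) (A : 'M[R]_(m + 1, n)).

Lemma Fv_face : is_face (conv_mx A) (Fv v A).
Proof.
split; first by move=> a [].
  move=> a b t [ca la] [cb lb] t01; split; first exact: conv_mx_convex.
  move=> c cc; rewrite lin1D !lin1Z.
  have := la c cc; have := lb c cc; case/andP: t01 => t0 t1; nra.
move=> a b t ca cb /andP[t0 t1] [_ lab].
have := lab a ca; have := lab b cb; rewrite lin1D !lin1Z => hb ha.
have la : lin1 v a <= lin1 v (t *: a + (1 - t) *: b) by rewrite lin1D !lin1Z; nra.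
have lb : lin1 v b <= lin1 v (t *: a + (1 - t) *: b) by rewrite lin1D !lin1Z; nra.
by split; split=> // c cc; [apply: le_trans la _ | apply: le_trans lb _]; exact: lab.
Qed.

Lemma Fv_cancel (r : 'cV[R]_n) (mu : R) g :
  (forall k, 0 <= r k 0) -> \sum_k r k 0 + mu = 1 -> 0 < mu -> conv_mx A g ->
  Fv v A (A *m r + mu *: g) -> Fv v A g.
Proof.
move=> r0 rmu mu0 cg [_ umin]; split=> // c cc.
set u := A *m r + mu *: g in umin *.
have lr : (1 - mu) * lin1 v u <= lin1 v (A *m r).
  rewrite lin1_mulmx -rmu addrK mulr_suml; apply: ler_sum => k _.
  by apply: ler_wpM2l => //; apply/umin/conv_mx_col.
have lu : lin1 v u = lin1 v (A *m r) + mu * lin1 v g by rewrite lin1D lin1Z.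
have lgu : lin1 v g <= lin1 v u by nra.
exact: le_trans lgu (umin c cc).
Qed.

Lemma Fv_residual (x w : 'cV[R]_n) : simplex n x -> simplex n w -> x != w ->
  Fv v A (A *m w) -> Fv v A (A *m residual w x).
Proof.
move=> sx sw xw Fw; have ewx : 0 < excess w x by rewrite -excessC excess_gt0.
apply: (Fv_cancel (fun k => common_ge0 k sw sx) (subrKC _ 1) ewx).
  by exists (residual w x) => //; apply: residual_simplex; rewrite // eq_sym.
by rewrite scalemxAr -mulmxDr residual_decomp // lt0r_neq0.
Qed.

End Objective.

Section MinimalFace.
Variables (R : realType) (p : nat) (C : set 'cV[R]_p) (g : 'cV[R]_p).

Definition min_face : set 'cV[R]_p :=
  [set a | C a /\ exists2 e : R, 0 < e & C (g + e *: (g - a))].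

Hypotheses (C_convex : is_convex C) (Cg : C g).

Lemma min_face_self : min_face g.
Proof. by split=> //; exists 1 => //; rewrite subrr scaler0 addr0. Qed.

Lemma min_face_shrink a (e e' : R) :
  C (g + e *: (g - a)) -> 0 < e' <= e -> C (g + e' *: (g - a)).
Proof.
move=> Ce /andP[e'0 e'e]; have e0 : 0 < e := lt_le_trans e'0 e'e.
have -> : g + e' *: (g - a) = (e' / e) *: (g + e *: (g - a)) + (1 - e' / e) *: g.
  by apply/colP => i; rewrite !mxE; field; exact: lt0r_neq0.
by apply: C_convex => //; rewrite ler_pdivrMr // mul1r e'e andbT divr_ge0 // ltW.
Qed.

Lemma min_face_convex : is_convex min_face.
Proof.
move=> a b t [Ca [ea ea0 Cea]] [Cb [eb eb0 Ceb]] t01; split; first exact: C_convex.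
have e0 : 0 < Num.min ea eb by rewrite lt_min ea0 eb0.
exists (Num.min ea eb) => //.
have ea' : 0 < Num.min ea eb <= ea by rewrite e0 ge_min lexx.
have eb' : 0 < Num.min ea eb <= eb by rewrite e0 ge_min lexx orbT.
have := C_convex (min_face_shrink Cea ea') (min_face_shrink Ceb eb') t01.
by congr C; apply/colP => i; rewrite !mxE; ring.
Qed.

Lemma min_face_extreme a b (t : R) : C a -> C b -> 0 < t < 1 ->
  min_face (t *: a + (1 - t) *: b) -> min_face a.
Proof.
move=> Ca Cb /andP[t0 t1] [_ [e e0 Ce]]; split=> //.
have d0 : 0 < 1 + e * (1 - t) by rewrite addr_gt0 // mulr_gt0 // subr_gt0.
set th := (1 + e * (1 - t))^-1.
have th0 : 0 < th by rewrite invr_gt0.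
have th1 : th <= 1 by rewrite invf_le1 // lerDl mulr_ge0 ?subr_ge0 // ltW.
exists (e * t * th); first by rewrite !mulr_gt0.
have -> : g + (e * t * th) *: (g - a) =
    th *: (g + e *: (g - (t *: a + (1 - t) *: b))) + (1 - th) *: b.
  by apply/colP => i; rewrite !mxE /th; field; exact: lt0r_neq0.
by apply: C_convex => //; rewrite ltW.
Qed.

Lemma min_face_sub F : is_face C F -> F g -> min_face `<=` F.
Proof.
move=> [_ _ Fext] Fg a [Ca [e e0 Ce]].
have e1 : 0 < 1 + e by rewrite addr_gt0.
have t01 : 0 < e / (1 + e) < 1.
  by rewrite divr_gt0 //= ltr_pdivrMr // mul1r ltrDr.
have g_mid : (e / (1 + e)) *: a + (1 - e / (1 + e)) *: (g + e *: (g - a)) = g.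
  by apply/colP => i; rewrite !mxE; field; exact: lt0r_neq0.
by have [] := Fext _ _ _ Ca Ce t01; rewrite ?g_mid.
Qed.

Lemma min_face_is_face F : is_face C F -> F g -> is_face F min_face.
Proof.
move=> faceF Fg; have [FC _ _] := faceF; split.
- exact: min_face_sub.
- exact: min_face_convex.
move=> a b t /FC Ca /FC Cb t01 Gab; split; first exact: min_face_extreme Gab.
apply: (min_face_extreme Cb Ca (t := 1 - t)).
  by case/andP: t01 => t0 t1; rewrite subr_gt0 t1 ltrBlDr ltrDl.
by rewrite subKr addrC.
Qed.

End MinimalFace.

Lemma min_face_col_weight (R : realType) p n (A : 'M[R]_(p, n)) g j :
  min_face (conv_mx A) g (col j A) ->
  exists2 s, simplex n s /\ A *m s = g & 0 < s j 0.
Proof.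
move=> [_ [e e0 [s' ss' As']]].
have e1 : 0 < 1 + e by rewrite addr_gt0.
have th01 : 0 <= (1 + e)^-1 <= 1 by rewrite invr_ge0 ltW //= invf_le1 // lerDl ltW.
exists ((1 + e)^-1 *: s' + (1 - (1 + e)^-1) *: delta_mx j 0).
  split; first by apply: simplex_convex th01 => //; exact: simplex_delta.
  rewrite mulmxDr -!scalemxAr As' -colE.
  by apply/colP => i; rewrite !mxE; field; exact: lt0r_neq0.
rewrite !mxE !eqxx mulr1 ltr_wpDl ?mulr_ge0 ?ss'.1 ?subr_gt0 ?invf_lt1 ?ltrDl //.
by case/andP: th01.
Qed.

Lemma overlap_argmax_min_face (R : realType) p n (A : 'M[R]_(p, n)) u (x w : 'cV[R]_n) k :
  simplex n x -> simplex n w -> x != w -> A *m w = u ->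
  (forall w', simplex n w' -> A *m w' = u -> overlap x w' <= overlap x w) ->
  residual x w k 0 != 0 -> ~ min_face (conv_mx A) (A *m residual w x) (col k A).
Proof.
move=> sx sw xw Aw wmax yk /min_face_col_weight [s [ss As] sk].
have ex0 := excess_gt0 sx sw xw.
have {}yk : 0 < residual x w k 0 by rewrite lt0r yk (residual_simplex sx sw xw).1.
pose w' := common x w + excess x w *: s.
have sw' : simplex n w'.
  exact: simplex_shift (fun i => common_ge0 i sx sw) (ltW ex0) (subrKC _ 1) ss.
have Aw' : A *m w' = u.
  have ewx : excess w x != 0 by rewrite -excessC lt0r_neq0.
  rewrite -Aw -(residual_decomp ewx) [common w x]commonC [excess w x]excessC.
  by rewrite !mulmxDr -(scalemxAr _ A s) -(scalemxAr _ A (residual w x)) As.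
apply/negP: (wmax _ sw' Aw'); rewrite -ltNge.
have w'E i : w' i 0 = common x w i 0 + excess x w * s i 0 by rewrite !mxE.
apply: (overlap_lt (j := k)) => [i||]; rewrite ?w'E.
- by rewrite lerDl mulr_ge0 ?(ltW ex0) ?(ss.1 i).
- by rewrite -residual_gt0.
- by rewrite ltrDl mulr_gt0.
Qed.

Section VNorm.
Variables (R : realType) (m : nat) (N : 'cV[R]_m -> R) (v : 'cV[R]_m).

Lemma vnorm_gt0 (w : 'cV[R]_(m + 1)) : is_norm N -> w != 0 -> 0 < vnorm N v w.
Proof.
move=> [N0 _ _] w0; rewrite lt_neqAle sqrtr_ge0 andbT eq_sym; apply: contra w0.
rewrite sqrtr_eq0 -/(lin1 v w) => le0.
have /eqP : N (usubmx w) ^+ 2 + `|lin1 v w| = 0.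
  by apply/eqP; rewrite eq_le le0 addr_ge0 ?sqr_ge0.
rewrite paddr_eq0 ?sqr_ge0 // => /andP[/eqP Nu0 /eqP L0].
have u0 : usubmx w = 0 by apply/N0/eqP; rewrite -sqrf_eq0 Nu0.
have d0 : dsubmx w = 0.
  apply/colP => i; rewrite (ord1 i) [RHS]mxE; apply/eqP.
  move: L0 => /eqP; rewrite normr_eq0 /lin1 u0 /dotv big1 ?add0r //.
  by move=> k _; rewrite mxE mulr0.
by rewrite -[w]vsubmxK u0 d0 col_mx0.
Qed.

Lemma vnormZ_le (k : R) (w : 'cV[R]_(m + 1)) : is_norm N -> 1 <= `|k| ->
  vnorm N v (k *: w) <= `|k| * vnorm N v w.
Proof.
move=> [_ NZ _] k1; have uZ : usubmx (k *: w) = k *: usubmx w by rewrite linearZ.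
rewrite /vnorm -/(lin1 v (k *: w)) -/(lin1 v w) uZ NZ lin1Z !normrM exprMn.
set a := N (usubmx w); set L := `|lin1 v w|.
have L0 : 0 <= L := normr_ge0 _.
have -> : `|k| * Num.sqrt (a ^+ 2 + L) = Num.sqrt (`|k| ^+ 2 * (a ^+ 2 + L)).
  by rewrite sqrtrM ?sqr_ge0 // sqrtr_sqr normr_id.
have kL : 0 <= `|k| * L * (`|k| - 1) by rewrite !mulr_ge0 ?subr_ge0.
by rewrite ler_sqrt ?mulr_ge0 ?addr_ge0 ?sqr_ge0 //; nra.
Qed.

Lemma distv_ge0 (F G : set 'cV[R]_(m + 1)) : 0 <= distv N v F G.
Proof.
rewrite /distv; set E := [set r | _].
have E_ge0 : lbound E 0 by move=> r [w [w' [_ [_ ->]]]]; exact: sqrtr_ge0.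
have [[r Er]|/forallNP nE] := pselect (exists r, E r).
  by apply: lb_le_inf => //; exists r.
by rewrite (_ : E = set0) ?inf0 //; apply/seteqP; split=> r // /nE.
Qed.

Lemma distv_le (F G : set 'cV[R]_(m + 1)) a b :
  F a -> G b -> distv N v F G <= vnorm N v (a - b).
Proof.
move=> Fa Gb; apply: ge_inf; last by exists a, b.
by exists 0 => _ [w [w' [_ [_ ->]]]]; exact: sqrtr_ge0.
Qed.

Lemma Phi_le_distv n (A : 'M[R]_(m + 1, n)) G :
  is_face (Fv v A) G -> G !=set0 -> G <> conv_mx A ->
  Phi N v A <= distv N v G (conv_cols A [set j | ~ G (col j A)]).
Proof.
move=> faceG G0 GA; apply: ge_inf; last by exists G.
by exists 0 => _ [G' [_ _ _ ->]]; exact: distv_ge0.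
Qed.

Lemma Phi_le_vnorm n (A : 'M[R]_(m + 1, n)) G g (y : 'cV[R]_n) :
  is_face (Fv v A) G -> G g -> simplex n y ->
  (forall k, y k 0 != 0 -> ~ G (col k A)) ->
  Phi N v A <= vnorm N v (g - A *m y).
Proof.
move=> faceG Gg sy yG.
have [k yk] := simplex_support sy.
have GA : G <> conv_mx A.
  by move=> GA; apply: (yG k (lt0r_neq0 yk)); rewrite GA; exact: conv_mx_col.
apply: le_trans (Phi_le_distv faceG (ex_intro _ g Gg) GA) _.
by apply: distv_le => //; exists y.
Qed.

End VNorm.

Unset Implicit Arguments.

Theorem lemma1 (R : realType) (m n : nat) (N : 'cV[R]_m -> R)
  (Ab : 'M[R]_(m + 1, n)) (v : 'cV[R]_m) (ub : 'cV[R]_(m + 1)) (x : 'cV[R]_n) :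
  is_norm N ->
  (exists i j : 'I_n, col i Ab != col j Ab) ->
  Fv v Ab ub -> simplex n x -> Ab *m x != ub ->
  let d := (vnorm N v (Ab *m x - ub))^-1 *: (Ab *m x - ub) in
  Phi N v Ab <=
    sup [set lam : R | exists y z : 'cV[R]_n,
           [/\ simplex n y, simplex n z, supp y `<=` supp x &
               Ab *m (y - z) = lam *: d]].
Proof.
move=> normN _ Fub sx Axu; cbv zeta; set V := vnorm N v _.
have [w [sw Aw wmax]] : exists w, [/\ simplex n w, Ab *m w = ub &
    forall w', simplex n w' -> Ab *m w' = ub -> overlap x w' <= overlap x w].
  by apply: overlap_argmax; case: Fub => -[w0 sw0 Aw0] _; exists w0.
have xw : x != w by apply: contraNneq Axu => ->; rewrite Aw.
have mu_gt0 := excess_gt0 sx sw xw.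
set mu := excess x w in mu_gt0 *; set y := residual x w; set z := residual w x.
have Ayz : Ab *m (y - z) = mu^-1 *: (Ab *m x - ub).
  by rewrite residualB -scalemxAr mulmxBr Aw.
have Fz : Fv v Ab (Ab *m z) by apply: Fv_residual; rewrite ?Aw.
have G_face := min_face_is_face (conv_mx_convex (A := Ab)) Fz.1 (Fv_face v Ab) Fz.
have yG := overlap_argmax_min_face sx sw xw Aw wmax.
have sy := residual_simplex sx sw xw.
apply: le_trans (Phi_le_vnorm N G_face (min_face_self Fz.1) sy yG) _.
rewrite -mulmxBr -opprB mulmxN Ayz -scaleNr.
have mu_inv_ge1 : 1 <= `|- mu^-1|.
  by rewrite normrN ger0_norm ?invf_ge1 ?excess_le1 // invr_ge0 ltW.
apply: le_trans (vnormZ_le v _ normN mu_inv_ge1) _.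
rewrite normrN ger0_norm; last by rewrite invr_ge0 ltW.
have V_gt0 : 0 < V by apply: vnorm_gt0; rewrite ?subr_eq0.
apply: (le_sup_direction (y := y) (z := z)).
- by rewrite scaler_eq0 negb_or invr_eq0 lt0r_neq0 //= subr_eq0.
- exact: sy.
- by apply: residual_simplex; rewrite // eq_sym.
- exact: supp_residual.
- by rewrite Ayz scalerA -mulrA mulfV ?mulr1 // lt0r_neq0.
Qed.
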